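(* Let $X$ be a real Banach space and $Y$ a linear subspace of $X$ with a norm $\|\cdot\|_Y$ such that $K:=U(Y)=\{g\in Y:\|g\|_Y\le1\}$ is a compact subset of $X$, and let $C_0$ be a constant with $\|g\|_X\le C_0\|g\|_Y$ for all $g\in Y$. Let $\lambda_1,\dots,\lambda_m\in X^*$ with $\|\lambda_j\|_{X^*}=1$, let $f\in K$ and $w:=\lambda(f)$, and assume $R(K_w)_X\neq0$. For $\mu>0$ define on $X$ the loss $$\mathcal{L}_\mu(g):=\|\lambda(g)-w\|+\mu\|g\|_Y .$$ Let $C>2$. Let $\mu>0$ and $\delta>0$ satisfy $\delta\le\mu^2$ and $$\varepsilon+2R(K(w,2\varepsilon))_X\le C\,R(K_w)_X,\qquad \varepsilon:=\mu\max(C_0,1+\mu),$$ (such $\mu$ exist, namely every sufficiently small $\mu>0$ satisfies this). Let $\Sigma\subset X$ satisfy $\operatorname{dist}(K,\Sigma\cap K)_X<\delta$, and let $\hat f\in\mathop{\rm argmin}_{g\in\Sigma}\mathcal{L}_\mu(g)$ be any minimizer. Then $$\|f-\hat f\|_X\le C\,R(K_w)_X .$$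
   Context: Convention: $\|g\|_Y:=\infty$ for $g\in X\setminus Y$. For $g\in X$, $\lambda(g):=(\lambda_1(g),\dots,\lambda_m(g))$; on $\mathbb{R}^m$, $\|v\|:=\big[\frac1m\sum_{j=1}^m|v_j|^2\big]^{1/2}$. For $A,B\subset X$, $\operatorname{dist}(A,B)_X:=\sup_{a\in A}\inf_{b\in B}\|a-b\|_X$. $K_w:=\{h\in K:\lambda(h)=w\}$, $K(w,\varepsilon):=\bigcup_{w'\in\mathbb{R}^m,\ \|w'-w\|\le\varepsilon}K_{w'}$. For $S\subset X$, $R(S)_X:=\inf\{r:\ S\subset B(z,r)_X\text{ for some }z\in X\}$ (Chebyshev radius), with $B(z,r)_X$ the ball of center $z$, radius $r$. *)

From HB Require Import structures.
From mathcomp Require Import all_boot all_order all_algebra.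
From mathcomp Require Import all_classical all_reals all_analysis.
Import Order.TTheory GRing.Theory Num.Theory.
Import numFieldNormedType.Exports.

Set Implicit Arguments.
Unset Strict Implicit.
Unset Printing Implicit Defensive.

Local Open Scope classical_set_scope.
Local Open Scope ring_scope.

Section Defs.
Context {R : realType} {X : normedModType R}.

Definition is_subspace (Y : set X) : Prop :=
  Y 0 /\ (forall (a : R) (x y : X), Y x -> Y y -> Y (a *: x + y)).

Definition is_norm_on (Y : set X) (nY : X -> R) : Prop :=
  (forall x, Y x -> 0 <= nY x) /\
  (forall x, Y x -> nY x = 0 -> x = 0) /\
  (forall (a : R) x, Y x -> nY (a *: x) = `|a| * nY x) /\
  (forall x y, Y x -> Y y -> nY (x + y) <= nY x + nY y).

Definition unit_ball_Y (Y : set X) (nY : X -> R) : set X :=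
  [set g | Y g /\ nY g <= 1].

Definition dual_norm (l : X -> R) : R :=
  sup [set `|l x| | x in [set x : X | `|x| <= 1]].

Definition vnorm (m : nat) (v : 'I_m -> R) : R :=
  Num.sqrt (m%:R^-1 * \sum_(j < m) `|v j| ^+ 2).

Definition Kw (m : nat) (K : set X) (lam : 'I_m -> X -> R) (w : 'I_m -> R)
  : set X := [set h | K h /\ forall j, lam j h = w j].

Definition Kweps (m : nat) (K : set X) (lam : 'I_m -> X -> R) (w : 'I_m -> R)
  (eps : R) : set X :=
  [set h | exists w' : 'I_m -> R,
     vnorm (fun j => w' j - w j) <= eps /\ Kw K lam w' h].

Definition cheb_rad (S : set X) : \bar R :=
  ereal_inf [set r%:E | r in
    [set r : R | exists z : X, forall s, S s -> `|s - z| <= r]].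

Definition hdist (A B : set X) : \bar R :=
  ereal_sup [set ereal_inf [set (`|a - b|)%:E | b in B] | a in A].

Definition normY (Y : set X) (nY : X -> R) (g : X) : \bar R :=
  if `[< Y g >] then (nY g)%:E else +oo%E.

Definition loss (m : nat) (Y : set X) (nY : X -> R) (lam : 'I_m -> X -> R)
  (w : 'I_m -> R) (mu : R) (g : X) : \bar R :=
  ((vnorm (fun j => lam j g - w j))%:E + mu%:E * normY Y nY g)%E.

End Defs.

From mathcomp Require Import all_boot all_order all_algebra.
From mathcomp Require Import all_classical all_reals all_analysis.
From mathcomp Require Import ring lra.
Import Order.TTheory GRing.Theory Num.Theory.
Import numFieldNormedType.Exports.
Set Implicit Arguments.
Unset Strict Implicit.
Unset Printing Implicit Defensive.

Local Open Scope classical_set_scope.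
Local Open Scope ring_scope.

(* A point g of Sigma /\ K within delta of f has loss at most mu^2 + mu, so
   does the minimizer fhat: its misfit is at most mu (1 + mu) and
   ||fhat||_Y <= 1 + mu.  Dividing fhat by 1 + mu brings it into K while moving
   it by at most eps in X, so the rescaled minimizer, like f itself, lies in
   K(w, 2 eps).  Two points of a set are at distance at most twice its
   Chebyshev radius, whence ||f - fhat|| <= 2 R(K(w, 2 eps)) + eps
   <= C R(K_w). *)

Section Vnorm.
Context {R : realType} {m : nat}.
Implicit Types u v : 'I_m -> R.

Lemma CauchySchwarz_sum u v :
  (\sum_j u j * v j) ^+ 2 <= (\sum_j u j ^+ 2) * (\sum_j v j ^+ 2).
Proof.
set P := \sum_j u j ^+ 2; set Q := \sum_j v j ^+ 2; set S := \sum_j u j * v j.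
have lagrange : \sum_i \sum_j (u i * v j - u j * v i) ^+ 2 = 2 * (P * Q - S ^+ 2).
  transitivity (P * Q + Q * P - 2 * (S * S)); last by ring.
  rewrite !big_distrlr /= mulr_sumr -big_split -sumrB /=; apply: eq_bigr => i _.
  rewrite mulr_sumr -big_split -sumrB /=; apply: eq_bigr => j _.
  ring.
rewrite -subr_ge0 -(pmulr_rge0 _ (ltr0n R 2)) -lagrange.
by apply: sumr_ge0 => i _; apply: sumr_ge0 => j _; apply: sqr_ge0.
Qed.

Lemma ler_vnormD u v : vnorm (fun j => u j + v j) <= vnorm u + vnorm v.
Proof.
have normK (x : R) : `|x| ^+ 2 = x ^+ 2 by rewrite real_normK ?num_real.
rewrite /vnorm !sqrtrM ?invr_ge0 ?ler0n // -mulrDr ler_wpM2l ?sqrtr_ge0 //=.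
under [X in Num.sqrt X]eq_bigr do rewrite normK.
under [X in _ <= Num.sqrt X + _]eq_bigr do rewrite normK.
under [X in _ <= _ + Num.sqrt X]eq_bigr do rewrite normK.
set P := \sum_j u j ^+ 2; set Q := \sum_j v j ^+ 2; set S := \sum_j u j * v j.
have P0 : 0 <= P by apply: sumr_ge0 => j _; apply: sqr_ge0.
have Q0 : 0 <= Q by apply: sumr_ge0 => j _; apply: sqr_ge0.
have -> : \sum_j (u j + v j) ^+ 2 = P + 2 * S + Q.
  by rewrite /P /Q /S mulr_sumr -!big_split /=; apply: eq_bigr => j _; ring.
have S_le : S <= Num.sqrt P * Num.sqrt Q.
  rewrite -sqrtrM // (le_trans (ler_norm S)) // -sqrtr_sqr ler_sqrt ?mulr_ge0 //.
  exact: CauchySchwarz_sum.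
rewrite -[leRHS]ger0_norm ?addr_ge0 ?sqrtr_ge0 // -sqrtr_sqr.
by rewrite ler_sqrt ?sqr_ge0 // sqrrD !sqr_sqrtr //; lra.
Qed.

Lemma vnorm_le u (b : R) : (0 < m)%N -> 0 <= b -> (forall j, `|u j| <= b) ->
  vnorm u <= b.
Proof.
move=> m_gt0 b_ge0 u_le; rewrite /vnorm -(ger0_norm b_ge0) -sqrtr_sqr.
rewrite ler_sqrt ?sqr_ge0 // ler_pdivrMl ?ltr0n //.
apply: le_trans (_ : \sum_(j < m) b ^+ 2 <= _).
  by apply: ler_sum => j _; rewrite lerXn2r ?nnegrE.
by rewrite sumr_const card_ord mulr_natl.
Qed.
End Vnorm.

Lemma le_dual_norm (R : realType) (X : normedModType R) (l : {linear X -> R^o})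
    (x : X) :
  0 < dual_norm (l : X -> R) -> `|l x| <= dual_norm (l : X -> R) * `|x|.
Proof.
(* [sup] of an unbounded set is [0], so a positive dual norm forces [l] to be
   bounded on the unit ball. *)
rewrite /dual_norm; set E := [set _ | _ in _] => E_gt0.
have E_bounded : has_ubound E.
  apply: contrapT => E_unbounded.
  by move: E_gt0; rewrite sup_out ?ltxx // => -[].
have [->|x_neq0] := eqVneq x 0; first by rewrite linear0 !normr0 mulr0.
have x_gt0 : 0 < `|x| by rewrite normr_gt0.
have E_unit : E `|l (`|x|^-1 *: x)|.
  by exists (`|x|^-1 *: x); rewrite //= normrZ normfV normr_id mulVf ?gt_eqF.
have := ub_le_sup E_bounded E_unit.
by rewrite linearZ /= normrZ normfV normr_id ler_pdivrMl // mulrC.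
Qed.

Lemma vnorm_sub_le_dist (R : realType) (X : normedModType R) (m : nat)
    (lam : 'I_m -> {linear X -> R^o}) (g h : X) :
  (0 < m)%N -> (forall j, dual_norm (lam j : X -> R) = 1) ->
  vnorm (fun j => lam j g - lam j h) <= `|g - h|.
Proof.
move=> m_gt0 lam_dual; apply: vnorm_le => // j.
by rewrite -linearB -[leRHS]mul1r -(lam_dual j) le_dual_norm // lam_dual.
Qed.

Section ChebyshevRadius.
Context {R : realType} {X : normedModType R}.
Local Open Scope ereal_scope.

Lemma ler_dist_cheb_rad (S : set X) (a b : X) :
  S a -> S b -> (`|a - b|)%:E <= 2%:E * cheb_rad S.
Proof.
move=> Sa Sb; rewrite -lee_pdivrMl // -EFinM.
apply: le_ereal_inf_tmp => _ [r [z Sz] <-]; rewrite lee_fin.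
have := ler_distD z a b; rewrite (distrC z) => ab_le.
by have := Sz _ Sa; have := Sz _ Sb; lra.
Qed.

Lemma hdist_lt_exists (A B : set X) (d : R) (a : X) :
  hdist A B < d%:E -> A a -> exists2 b, B b & (`|a - b| < d)%R.
Proof.
move=> AB_lt Aa.
have : ereal_inf [set (`|a - b|)%:E | b in B] < d%:E.
  by apply: le_lt_trans AB_lt; apply: ereal_sup_ubound; exists a.
by move=> /ereal_inf_lt[_ [b Bb <-]]; rewrite lte_fin; exists b.
Qed.

End ChebyshevRadius.

Lemma Kweps_intro (R : realType) (X : normedModType R) (m : nat) (K : set X)
    (lam : 'I_m -> X -> R) (w : 'I_m -> R) (e : R) (h : X) :
  K h -> vnorm (fun j => lam j h - w j) <= e -> Kweps K lam w e h.
Proof. by move=> Kh h_near; exists (fun j => lam j h). Qed.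

Section NormedSubspace.
Context {R : realType} {X : normedModType R} (Y : set X) (nY : X -> R).
Hypotheses (Y_subspace : is_subspace Y) (nY_norm : is_norm_on Y nY).

Lemma subspaceZ (a : R) (x : X) : Y x -> Y (a *: x).
Proof.
by move=> Yx; have := Y_subspace.2 a x 0 Yx Y_subspace.1; rewrite addr0.
Qed.

Lemma unit_ball_Y_scale (t : R) (h : X) :
  0 < t -> Y h -> nY h <= t -> unit_ball_Y Y nY (t^-1 *: h).
Proof.
move=> t_gt0 Yh nYh_le; split; first exact: subspaceZ.
by rewrite nY_norm.2.2.1 // gtr0_norm ?invr_gt0 // ler_pdivrMl // mulr1.
Qed.

Lemma dist_scale_le (C0 t : R) (h : X) :
  (forall g, Y g -> `|g| <= C0 * nY g) -> 1 <= t -> Y h -> nY h <= t ->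
  `|h - t^-1 *: h| <= (t - 1) * Num.max C0 0.
Proof.
move=> nY_dom t_ge1 Yh nYh_le.
have t_gt0 : 0 < t by apply: lt_le_trans t_ge1.
have nYh_ge0 := nY_norm.1 h Yh.
have h_le : `|h| <= Num.max C0 0 * t.
  apply: (le_trans (nY_dom h Yh)); apply: (@le_trans _ _ (Num.max C0 0 * nY h)).
    by rewrite ler_wpM2r // le_max lexx.
  by rewrite ler_wpM2l // le_max lexx orbT.
have -> : h - t^-1 *: h = (1 - t^-1) *: h by rewrite scalerBl scale1r.
rewrite normrZ ger0_norm ?subr_ge0 ?invf_le1 //.
apply: (@le_trans _ _ ((1 - t^-1) * (Num.max C0 0 * t))).
  by rewrite ler_wpM2l // subr_ge0 invf_le1.
by rewrite mulrCA mulrBl mul1r mulVf ?gt_eqF // mulrC.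
Qed.

Lemma loss_fin (m : nat) (lam : 'I_m -> X -> R) (w : 'I_m -> R) (mu : R)
    (g : X) :
  Y g -> loss Y nY lam w mu g = (vnorm (fun j => lam j g - w j) + mu * nY g)%:E.
Proof. by move=> Yg; rewrite /loss /normY asboolT. Qed.

Lemma loss_le_fin (m : nat) (lam : 'I_m -> X -> R) (w : 'I_m -> R) (mu r : R)
    (g : X) :
  0 < mu -> (loss Y nY lam w mu g <= r%:E)%E ->
  Y g /\ vnorm (fun j => lam j g - w j) + mu * nY g <= r.
Proof.
move=> mu_gt0; have [Yg|Yg] := pselect (Y g).
  by rewrite loss_fin // lee_fin.
by rewrite /loss /normY asboolF // gt0_muley ?lte_fin // addey.
Qed.

End NormedSubspace.

Section Minimizer.
Context {R : realType} {X : normedModType R} (Y : set X) (nY : X -> R)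
  (m : nat) (lam : 'I_m -> {linear X -> R^o}) (mu : R).
Hypotheses (nY_norm : is_norm_on Y nY) (m_gt0 : (0 < m)%N)
  (lam_dual : forall j, dual_norm (lam j : X -> R) = 1).
Local Notation lamf := (fun j => lam j : X -> R).

Lemma argmin_loss_bounds (Sigma : set X) (f fhat : X) (delta : R) :
  0 < mu -> delta <= mu ^+ 2 -> unit_ball_Y Y nY f ->
  (hdist (unit_ball_Y Y nY) (Sigma `&` unit_ball_Y Y nY) < delta%:E)%E ->
  (forall g, Sigma g -> (loss Y nY lamf (fun j => lam j f) mu fhat
                         <= loss Y nY lamf (fun j => lam j f) mu g)%E) ->
  [/\ Y fhat, vnorm (fun j => lam j fhat - lam j f) <= mu * (1 + mu)
    & nY fhat <= 1 + mu].
Proof.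
move=> mu_gt0 delta_le Kf Sigma_dense fhat_min.
have [g [Sigma_g [Yg nYg_le1]] fg_lt] := hdist_lt_exists Sigma_dense Kf.
have [Yfhat fhat_loss] : Y fhat /\
    vnorm (fun j => lam j fhat - lam j f) + mu * nY fhat <= mu * (1 + mu).
  apply: (loss_le_fin (lam := lamf) mu_gt0).
  apply: le_trans (fhat_min g Sigma_g) _; rewrite loss_fin // lee_fin.
  rewrite mulrDr mulr1 [leRHS]addrC -expr2.
  apply: lerD; last exact: ler_piMr (ltW mu_gt0) nYg_le1.
  apply: le_trans (vnorm_sub_le_dist g f m_gt0 lam_dual) _.
  by rewrite distrC (le_trans (ltW fg_lt)).
have nYfhat_ge0 := nY_norm.1 _ Yfhat.
have vfhat_ge0 : 0 <= vnorm (fun j => lam j fhat - lam j f) := sqrtr_ge0 _.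
split => //; first by nra.
by rewrite -(ler_pM2l mu_gt0); lra.
Qed.

Lemma rescaled_argmin_near (C0 : R) (w : 'I_m -> R) (fhat : X) :
  0 < mu -> is_subspace Y -> (forall g, Y g -> `|g| <= C0 * nY g) ->
  Y fhat -> vnorm (fun j => lam j fhat - w j) <= mu * (1 + mu) ->
  nY fhat <= 1 + mu ->
  Kweps (unit_ball_Y Y nY) lamf w (2 * (mu * Num.max C0 (1 + mu)))
    ((1 + mu)^-1 *: fhat) /\
  `|fhat - (1 + mu)^-1 *: fhat| <= mu * Num.max C0 (1 + mu).
Proof.
move=> mu_gt0 Y_sub nY_dom Yfhat vfhat_le nYfhat_le.
set eps := mu * _; set f' := _ *: fhat.
have [C0_le mu_le] : mu * Num.max C0 0 <= eps /\ mu * (1 + mu) <= eps.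
  split; rewrite /eps ler_pM2l //.
    by rewrite ge_max !le_max lexx /=; apply/orP; right; lra.
  by rewrite le_max lexx orbT.
have fhat_f' : `|fhat - f'| <= eps.
  have one_le : 1 <= 1 + mu by lra.
  apply: le_trans (dist_scale_le nY_norm nY_dom one_le Yfhat nYfhat_le) _.
  by rewrite addrAC subrr add0r.
split=> //; apply: Kweps_intro; first by apply: unit_ball_Y_scale => //; lra.
have -> : (fun j => lam j f' - w j) =
    (fun j => (lam j f' - lam j fhat) + (lam j fhat - w j)).
  by apply: funext => j; rewrite subrKA.
apply: le_trans (ler_vnormD _ _) _.
by have := vnorm_sub_le_dist f' fhat m_gt0 lam_dual; rewrite distrC; lra.
Qed.

End Minimizer.

Theorem theorem3p1 (R : realType) (X : completeNormedModType R)
  (Y : set X) (nY : X -> R) (C0 : R) (m : nat)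
  (lam : 'I_m -> {linear X -> R^o}) (f : X) (C mu delta : R) (Sigma : set X)
  (fhat : X) :
  is_subspace Y ->
  is_norm_on Y nY ->
  compact (unit_ball_Y Y nY) ->
  (forall g, Y g -> `|g| <= C0 * nY g) ->
  (0 < m)%N ->
  (forall j, continuous (lam j : X -> R)) ->
  (forall j, dual_norm (lam j : X -> R) = 1) ->
  unit_ball_Y Y nY f ->
  let K := unit_ball_Y Y nY in
  let w := fun j => lam j f in
  cheb_rad (Kw K (fun j => lam j : X -> R) w) != 0%E ->
  2 < C ->
  0 < mu -> 0 < delta -> delta <= mu ^+ 2 ->
  let eps := mu * Num.max C0 (1 + mu) in
  (eps%:E + 2%:E * cheb_rad (Kweps K (fun j => lam j : X -> R) w (2 * eps))
     <= C%:E * cheb_rad (Kw K (fun j => lam j : X -> R) w))%E ->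
  (hdist K (Sigma `&` K) < delta%:E)%E ->
  Sigma fhat ->
  (forall g, Sigma g ->
     (loss Y nY (fun j => lam j : X -> R) w mu fhat
        <= loss Y nY (fun j => lam j : X -> R) w mu g)%E) ->
  ((`|f - fhat|)%:E <= C%:E * cheb_rad (Kw K (fun j => lam j : X -> R) w))%E.
Proof.
move=> Y_sub nY_norm _ nY_dom m_gt0 _ lam_dual Kf K w _ _ mu_gt0 _ delta_le eps
  radius_bound Sigma_dense _ fhat_min.
have [Yfhat vfhat_le nYfhat_le] := argmin_loss_bounds nY_norm m_gt0 lam_dual
  mu_gt0 delta_le Kf Sigma_dense fhat_min.
have [f'_near fhat_f'] := rescaled_argmin_near nY_norm m_gt0 lam_dual
  mu_gt0 Y_sub nY_dom Yfhat vfhat_le nYfhat_le.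
have eps_ge0 : 0 <= eps := le_trans (normr_ge0 _) fhat_f'.
have f_near : Kweps K (fun j => lam j : X -> R) w (2 * eps) f.
  apply: Kweps_intro Kf _; apply: vnorm_le => // [|j]; first exact: mulr_ge0.
  by rewrite subrr normr0 mulr_ge0.
apply: le_trans radius_bound.
apply: (@le_trans _ _ ((`|f - (1 + mu)^-1 *: fhat| + eps)%:E)).
  rewrite lee_fin; apply: le_trans (ler_distD ((1 + mu)^-1 *: fhat) f fhat) _.
  by rewrite lerD2l distrC.
by rewrite EFinD addeC leeD2l // ler_dist_cheb_rad.
Qed.
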